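(* Let $q>0$. There is no function $u\in C^{4}(\mathbb{R}^{2})$ with $u>0$ in $\mathbb{R}^{2}$ satisfying $\Delta^{2}u+u^{-q}=0$ in $\mathbb{R}^{2}$.
   Context: $\Delta$ denotes the Laplacian on $\mathbb{R}^{2}$ and $\Delta^{2}=\Delta\Delta$. *)

From Stdlib Require Import Reals List.
From Coquelicot Require Import Coquelicot.
Open Scope R_scope.

(* Functions on R^2 are represented as curried maps R -> R -> R.
   A direction is a bool: true = d/dx, false = d/dy. *)
Definition partial (b : bool) (f : R -> R -> R) : R -> R -> R :=
  if b then fun x y => Derive (fun t => f t y) x
  else fun x y => Derive (fun t => f x t) y.

Definition ex_partial (b : bool) (f : R -> R -> R) (x y : R) : Prop :=
  if b then ex_derive (fun t => f t y) x else ex_derive (fun t => f x t) y.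

Fixpoint pd (l : list bool) (f : R -> R -> R) : R -> R -> R :=
  match l with
  | nil => f
  | b :: l' => partial b (pd l' f)
  end.

Definition Ck2 (k : nat) (f : R -> R -> R) : Prop :=
  (forall (l : list bool) (b : bool) (x y : R),
      (length l < k)%nat -> ex_partial b (pd l f) x y) /\
  (forall (l : list bool) (p : R * R),
      (length l <= k)%nat ->
      continuous (fun z : R * R => pd l f (fst z) (snd z)) p).

Definition laplacian (f : R -> R -> R) : R -> R -> R :=
  fun x y => pd (true :: true :: nil) f x y + pd (false :: false :: nil) f x y.

From Stdlib Require Import Reals Lra Lia List FunctionalExtensionality.
From Coquelicot Require Import Coquelicot.
Open Scope R_scope.

(* The proof works with circle integrals  A_g(r) = \int_0^{2 pi} g(r cos t, r sin t) dt
   (2 pi times the circular mean of g).  For g of class C^2 the polar form of the Laplacian,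
   integrated over the circle, gives the radial identities
        A_g'(r) = \int g_r,        (r A_g'(r))' = r A_{Delta g}(r),
   the angular term integrating to zero by periodicity.  Put w = Delta u.
   Since Delta w = -u^(-q) < 0, we get (r A_w')' < 0, so r A_w'(r) decreases from 0 and
   A_w(r) <= C - a ln r: A_w is eventually <= -1.  Then (r A_u')' = r A_w <= -r eventually,
   whence A_u' <= -1 eventually and A_u becomes negative, contradicting u > 0. *)

Lemma mvt_closed (g dg : R -> R) (a b : R) : a <= b ->
  (forall x, a <= x <= b -> is_derive g x (dg x)) ->
  exists c, a <= c <= b /\ g b - g a = dg c * (b - a).
Proof.
  intros hab hd.
  destruct (MVT_gen g a b dg) as [c [hc e]].
  - intros x hx. rewrite Rmin_left, Rmax_right in hx by lra. apply hd. lra.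
  - intros x hx. rewrite Rmin_left, Rmax_right in hx by lra.
    apply continuity_pt_filterlim, (ex_derive_continuous (K:=R_AbsRing) (V:=R_NormedModule)).
    eexists. apply hd. lra.
  - rewrite Rmin_left, Rmax_right in hc by lra. exists c. auto.
Qed.

Lemma nonincreasing_of_deriv (g dg : R -> R) (a b : R) : a <= b ->
  (forall x, a <= x <= b -> is_derive g x (dg x)) ->
  (forall x, a <= x <= b -> dg x <= 0) -> g b <= g a.
Proof.
  intros hab hd hn. destruct (mvt_closed g dg a b hab hd) as [c [hc e]].
  pose proof (hn c hc). nra.
Qed.

Lemma decreasing_of_deriv (g dg : R -> R) (a b : R) : a < b ->
  (forall x, a <= x <= b -> is_derive g x (dg x)) ->
  (forall x, a <= x <= b -> dg x < 0) -> g b < g a.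
Proof.
  intros hab hd hn. destruct (mvt_closed g dg a b (Rlt_le _ _ hab) hd) as [c [hc e]].
  pose proof (hn c hc). nra.
Qed.

Lemma is_derive_eq (g : R -> R) (x a b : R) : is_derive g x a -> a = b -> is_derive g x b.
Proof. intros h <-. exact h. Qed.

(* Derivative rules stated on Rplus/Rmult so that they unify with real-valued goals. *)
Lemma is_derive_Rconst (c x : R) : is_derive (fun _ => c) x 0.
Proof. exact (is_derive_const c x). Qed.

Lemma is_derive_Rplus (g h : R -> R) (x a b : R) :
  is_derive g x a -> is_derive h x b -> is_derive (fun s => g s + h s) x (a + b).
Proof. exact (is_derive_plus g h x a b). Qed.

Lemma is_derive_Rmult (g h : R -> R) (x a b : R) :
  is_derive g x a -> is_derive h x b -> is_derive (fun s => g s * h s) x (a * h x + g x * b).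
Proof. intros hg hh. exact (is_derive_mult g h x a b hg hh Rmult_comm). Qed.

Definition continuous2 (G : R -> R -> R) : Prop :=
  forall p : R * R, continuous (fun z => G (fst z) (snd z)) p.

Lemma continuous2_plus (G H : R -> R -> R) :
  continuous2 G -> continuous2 H -> continuous2 (fun x y => G x y + H x y).
Proof. intros hG hH p. exact (continuous_plus _ _ p (hG p) (hH p)). Qed.

Lemma continuous2_mult (G H : R -> R -> R) :
  continuous2 G -> continuous2 H -> continuous2 (fun x y => G x y * H x y).
Proof. intros hG hH p. exact (continuous_mult _ _ p (hG p) (hH p)). Qed.

Lemma continuous2_opp (G : R -> R -> R) : continuous2 G -> continuous2 (fun x y => - G x y).
Proof.
  intros hG p. apply (continuous_ext (fun z => (-1) * G (fst z) (snd z))).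
  - intros z. simpl. ring.
  - exact (continuous_mult (fun _ => -1) _ p (continuous_const _ p) (hG p)).
Qed.

Lemma continuous2_fst : continuous2 (fun x _ => x).
Proof. intros [x y]. apply continuous_fst. Qed.

Lemma continuous2_cos : continuous2 (fun _ t => cos t).
Proof.
  intros p. apply (continuous_comp (fun z : R * R => snd z) cos).
  - destruct p. apply continuous_snd.
  - apply (ex_derive_continuous (K:=R_AbsRing) (V:=R_NormedModule)). auto_derive. auto.
Qed.

Lemma continuous2_sin : continuous2 (fun _ t => sin t).
Proof.
  intros p. apply (continuous_comp (fun z : R * R => snd z) sin).
  - destruct p. apply continuous_snd.
  - apply (ex_derive_continuous (K:=R_AbsRing) (V:=R_NormedModule)). auto_derive. auto.
Qed.

Lemma continuous2_section (G : R -> R -> R) (r t : R) :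
  continuous2 G -> continuous (fun s => G r s) t.
Proof.
  intros hG. apply (continuous_comp_2 (fun _ : R => r) (fun s => s) G).
  - apply continuous_const.
  - apply continuous_id.
  - apply hG.
Qed.

Lemma pd_app (l m : list bool) (g : R -> R -> R) : pd (l ++ m) g = pd l (pd m g).
Proof. induction l as [|b l IH]; simpl; [reflexivity | rewrite IH; reflexivity]. Qed.

Lemma Ck2_shift (n k : nat) (m : list bool) (g : R -> R -> R) :
  Ck2 n g -> (length m + k <= n)%nat -> Ck2 k (pd m g).
Proof.
  intros [hex hcont] hk. split.
  - intros l b x y hl. rewrite <- pd_app. apply hex. rewrite length_app. lia.
  - intros l p hl. rewrite <- pd_app. apply hcont. rewrite length_app. lia.
Qed.

Lemma Ck2_weaken (n k : nat) (g : R -> R -> R) : Ck2 n g -> (k <= n)%nat -> Ck2 k g.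
Proof. intros h hk. exact (Ck2_shift n k nil g h hk). Qed.

Lemma Ck2_partial (k : nat) (b : bool) (g : R -> R -> R) :
  Ck2 (S k) g -> Ck2 k (partial b g).
Proof. intros h. exact (Ck2_shift (S k) k (b :: nil) g h ltac:(simpl; lia)). Qed.

Lemma Ck2_ex_partial (k : nat) (b : bool) (g : R -> R -> R) (x y : R) :
  Ck2 (S k) g -> ex_partial b g x y.
Proof. intros [h _]. apply (h nil). simpl. lia. Qed.

Lemma Ck2_continuous (k : nat) (g : R -> R -> R) : Ck2 k g -> continuous2 g.
Proof. intros [_ h] p. apply (h nil). simpl. lia. Qed.

Lemma pd_plus (k : nat) (g h : R -> R -> R) :
  Ck2 k g -> Ck2 k h -> forall l, (length l <= k)%nat -> forall x y,
    pd l (fun x y => g x y + h x y) x y = pd l g x y + pd l h x y.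
Proof.
  intros [eg _] [eh _] l. induction l as [|b l IH]; intros hl x y; simpl; [reflexivity|].
  simpl in hl. assert (hl' : (length l < k)%nat) by lia.
  destruct b; unfold partial.
  - rewrite (Derive_ext _ (fun t => pd l g t y + pd l h t y)) by (intro; apply IH; lia).
    apply Derive_plus; [apply (eg l true x y hl') | apply (eh l true x y hl')].
  - rewrite (Derive_ext _ (fun t => pd l g x t + pd l h x t)) by (intro; apply IH; lia).
    apply Derive_plus; [apply (eg l false x y hl') | apply (eh l false x y hl')].
Qed.

Lemma Ck2_plus (k : nat) (g h : R -> R -> R) :
  Ck2 k g -> Ck2 k h -> Ck2 k (fun x y => g x y + h x y).
Proof.
  intros hg hh. pose proof hg as [eg cg]. pose proof hh as [eh ch]. split.
  - intros l b x y hl. assert (hl' : (length l <= k)%nat) by lia.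
    destruct b; simpl.
    + apply (ex_derive_ext (fun t => pd l g t y + pd l h t y)).
      { intro t. symmetry. apply (pd_plus k); auto. }
      exact (ex_derive_plus _ _ x (eg l true x y hl) (eh l true x y hl)).
    + apply (ex_derive_ext (fun t => pd l g x t + pd l h x t)).
      { intro t. symmetry. apply (pd_plus k); auto. }
      exact (ex_derive_plus _ _ y (eg l false x y hl) (eh l false x y hl)).
  - intros l p hl.
    apply (continuous_ext (fun z => pd l g (fst z) (snd z) + pd l h (fst z) (snd z))).
    { intro z. symmetry. apply (pd_plus k); auto. }
    exact (continuous_plus _ _ p (cg l p hl) (ch l p hl)).
Qed.

Lemma Ck2_laplacian (k : nat) (g : R -> R -> R) : Ck2 (2 + k) g -> Ck2 k (laplacian g).
Proof.
  intros h. unfold laplacian. apply Ck2_plus.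
  - exact (Ck2_shift _ k (true :: true :: nil) g h ltac:(simpl; lia)).
  - exact (Ck2_shift _ k (false :: false :: nil) g h ltac:(simpl; lia)).
Qed.

Lemma is_derive_along_curve (g : R -> R -> R) (a b : R -> R) (a' b' t : R) :
  Ck2 1 g -> is_derive a t a' -> is_derive b t b' ->
  is_derive (fun s => g (a s) (b s)) t
    (partial true g (a t) (b t) * a' + partial false g (a t) (b t) * b').
Proof.
  intros hg ha hb.
  apply is_derive_Reals, derivable_pt_lim_comp_2d; try (apply is_derive_Reals; assumption).
  apply filterdiff_differentiable_pt_lim.
  eapply filterdiff_ext_lin.
  - apply is_derive_filterdiff with (dfx := partial true g).
    + apply filter_forall. intros [x y]. apply Derive_correct.
      exact (Ck2_ex_partial 0 true g x y hg).
    + apply Derive_correct. exact (Ck2_ex_partial 0 false g _ _ hg).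
    + exact (Ck2_continuous 0 _ (Ck2_partial 0 true g hg) (a t, b t)).
  - intros [x y]. reflexivity.
Qed.

Definition polar (g : R -> R -> R) (r t : R) : R := g (r * cos t) (r * sin t).

Definition radial (g : R -> R -> R) (r t : R) : R :=
  polar (partial true g) r t * cos t + polar (partial false g) r t * sin t.

Definition angular (g : R -> R -> R) (r t : R) : R :=
  polar (partial true g) r t * (- (r * sin t)) + polar (partial false g) r t * (r * cos t).

Definition radial2 (g : R -> R -> R) (r t : R) : R :=
  radial (partial true g) r t * cos t + radial (partial false g) r t * sin t.

Definition angular2 (g : R -> R -> R) (r t : R) : R :=
  angular (partial true g) r t * (- (r * sin t)) + polar (partial true g) r t * (- (r * cos t))
  + (angular (partial false g) r t * (r * cos t) + polar (partial false g) r t * (- (r * sin t))).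

Lemma polar_deriv_r (g : R -> R -> R) (r t : R) :
  Ck2 1 g -> is_derive (fun z => polar g z t) r (radial g r t).
Proof.
  intros hg. apply (is_derive_along_curve g (fun z => z * cos t) (fun z => z * sin t));
    [exact hg | auto_derive; auto; ring | auto_derive; auto; ring].
Qed.

Lemma polar_deriv_t (g : R -> R -> R) (r t : R) :
  Ck2 1 g -> is_derive (fun s => polar g r s) t (angular g r t).
Proof.
  intros hg. apply (is_derive_along_curve g (fun s => r * cos s) (fun s => r * sin s));
    [exact hg | auto_derive; auto; ring | auto_derive; auto; ring].
Qed.

Lemma radial_deriv_r (g : R -> R -> R) (r t : R) :
  Ck2 2 g -> is_derive (fun z => radial g z t) r (radial2 g r t).
Proof.
  intros hg. unfold radial at 1. eapply is_derive_eq.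
  - apply is_derive_Rplus; apply is_derive_Rmult;
      [apply polar_deriv_r, Ck2_partial, hg | apply is_derive_Rconst
      |apply polar_deriv_r, Ck2_partial, hg | apply is_derive_Rconst].
  - unfold radial2. ring.
Qed.

Lemma angular_deriv_t (g : R -> R -> R) (r t : R) :
  Ck2 2 g -> is_derive (fun s => angular g r s) t (angular2 g r t).
Proof.
  intros hg. unfold angular at 1. eapply is_derive_eq.
  - apply is_derive_Rplus; apply is_derive_Rmult;
      [apply polar_deriv_t, Ck2_partial, hg | auto_derive; auto
      |apply polar_deriv_t, Ck2_partial, hg | auto_derive; auto].
  - unfold angular2. simpl. ring.
Qed.

(* The Laplacian in polar coordinates, multiplied by r^2:
   r g_r + r^2 g_rr = r^2 (Delta g) - g_tt.  Mixed partials cancel without symmetry. *)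
Lemma polar_laplacian (g : R -> R -> R) (r t : R) :
  r * radial g r t + r * r * radial2 g r t = r * r * polar (laplacian g) r t - angular2 g r t.
Proof.
  assert (hct : cos t * cos t + sin t * sin t = 1).
  { pose proof (sin2_cos2 t) as h. unfold Rsqr in h. lra. }
  unfold radial2, angular2, radial, angular, polar, laplacian. cbn [pd].
  set (c := cos t) in *. set (s := sin t) in *.
  set (x := r * c). set (y := r * s).
  set (gx := partial true g x y). set (gy := partial false g x y).
  set (gxx := partial true (partial true g) x y). set (gxy := partial false (partial true g) x y).
  set (gyx := partial true (partial false g) x y). set (gyy := partial false (partial false g) x y).
  replace (r * r * (gxx + gyy)) with (r * r * (gxx + gyy) * (c * c + s * s)) by (rewrite hct; ring).
  unfold x, y. ring.
Qed.

Lemma continuous2_polar (g : R -> R -> R) : continuous2 g -> continuous2 (polar g).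
Proof.
  intros hg p.
  apply (continuous_comp_2 (fun z : R * R => fst z * cos (snd z))
                           (fun z : R * R => fst z * sin (snd z)) g).
  - exact (continuous2_mult _ _ continuous2_fst continuous2_cos p).
  - exact (continuous2_mult _ _ continuous2_fst continuous2_sin p).
  - apply hg.
Qed.

Lemma continuous2_polar_partial (b : bool) (g : R -> R -> R) :
  Ck2 1 g -> continuous2 (polar (partial b g)).
Proof. intros hg. exact (continuous2_polar _ (Ck2_continuous _ _ (Ck2_partial 0 b g hg))). Qed.

Lemma continuous2_radial (g : R -> R -> R) : Ck2 1 g -> continuous2 (radial g).
Proof.
  intros hg. unfold radial.
  apply continuous2_plus; apply continuous2_mult;
    auto using continuous2_cos, continuous2_sin, continuous2_polar_partial.
Qed.

Lemma continuous2_angular (g : R -> R -> R) : Ck2 1 g -> continuous2 (angular g).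
Proof.
  intros hg. unfold angular.
  apply continuous2_plus; apply continuous2_mult;
    auto using continuous2_opp, continuous2_mult, continuous2_fst, continuous2_cos,
               continuous2_sin, continuous2_polar_partial.
Qed.

Lemma continuous2_radial2 (g : R -> R -> R) : Ck2 2 g -> continuous2 (radial2 g).
Proof.
  intros hg. unfold radial2.
  apply continuous2_plus; apply continuous2_mult;
    auto using continuous2_cos, continuous2_sin, continuous2_radial, Ck2_partial.
Qed.

Lemma continuous2_angular2 (g : R -> R -> R) : Ck2 2 g -> continuous2 (angular2 g).
Proof.
  intros hg. assert (hg1 : Ck2 1 g) by exact (Ck2_weaken 2 1 g hg ltac:(lia)).
  unfold angular2.
  repeat apply continuous2_plus; apply continuous2_mult;
    auto using continuous2_opp, continuous2_mult, continuous2_fst, continuous2_cos,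
               continuous2_sin, continuous2_polar_partial, continuous2_angular, Ck2_partial.
Qed.

Definition circle_integral (G : R -> R -> R) (r : R) : R := RInt (fun t => G r t) 0 (2 * PI).

Lemma ex_RInt_circle (G : R -> R -> R) (r : R) :
  continuous2 G -> ex_RInt (fun t => G r t) 0 (2 * PI).
Proof.
  intros hG. apply (ex_RInt_continuous (V:=R_CompleteNormedModule)).
  intros t _. apply continuous2_section, hG.
Qed.

Lemma circle_integral_lin (G H : R -> R -> R) (c d r : R) :
  continuous2 G -> continuous2 H ->
  circle_integral (fun z t => c * G z t + d * H z t) r
  = c * circle_integral G r + d * circle_integral H r.
Proof.
  intros hG hH. unfold circle_integral.
  rewrite (RInt_plus (fun t => c * G r t) (fun t => d * H r t)).
  - rewrite (RInt_scal (fun t => G r t)), (RInt_scal (fun t => H r t))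
      by (apply ex_RInt_circle; assumption).
    reflexivity.
  - exact (ex_RInt_scal (fun t => G r t) 0 (2 * PI) c (ex_RInt_circle G r hG)).
  - exact (ex_RInt_scal (fun t => H r t) 0 (2 * PI) d (ex_RInt_circle H r hH)).
Qed.

Lemma circle_integral_deriv (G dG : R -> R -> R) (r : R) :
  (forall z t, is_derive (fun s => G s t) z (dG z t)) -> continuous2 G -> continuous2 dG ->
  is_derive (circle_integral G) r (circle_integral dG r).
Proof.
  intros hd hG hdG.
  assert (hD : forall z t, Derive (fun s => G s t) z = dG z t).
  { intros z t. apply is_derive_unique, hd. }
  assert (hDfun : (fun z t => Derive (fun s => G s t) z) = dG).
  { apply functional_extensionality; intro z. apply functional_extensionality; intro t. apply hD. }
  eapply is_derive_eq.
  - apply (is_derive_RInt_param G 0 (2 * PI) r).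
    + apply filter_forall. intros z t _. eexists. apply hd.
    + intros t _. rewrite hDfun. apply continuity_2d_pt_filterlim, (hdG (r, t)).
    + apply filter_forall. intros z. apply ex_RInt_circle, hG.
  - apply RInt_ext. intros t _. apply hD.
Qed.

Lemma continuous2_const (c : R) : continuous2 (fun _ _ => c).
Proof. intros p. apply continuous_const. Qed.

Lemma circle_integral_const (c r : R) : circle_integral (fun _ _ => c) r = 2 * PI * c.
Proof. unfold circle_integral. rewrite RInt_const. unfold scal. simpl. unfold mult. simpl. ring. Qed.

Lemma circle_integral_lt (G H : R -> R -> R) (r : R) :
  continuous2 G -> continuous2 H -> (forall t, G r t < H r t) ->
  circle_integral G r < circle_integral H r.
Proof.
  intros hG hH hlt. apply RInt_lt.
  - pose proof PI_RGT_0. lra.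
  - intros t _. apply continuous2_section, hH.
  - intros t _. apply continuous2_section, hG.
  - intros t _. apply hlt.
Qed.

Lemma circle_integral_neg (G : R -> R -> R) (r : R) :
  continuous2 G -> (forall t, G r t < 0) -> circle_integral G r < 0.
Proof.
  intros hG hlt.
  pose proof (circle_integral_lt G (fun _ _ => 0) r hG (continuous2_const 0) hlt) as h.
  rewrite circle_integral_const, Rmult_0_r in h. exact h.
Qed.

Lemma circle_integral_pos (G : R -> R -> R) (r : R) :
  continuous2 G -> (forall t, 0 < G r t) -> 0 < circle_integral G r.
Proof.
  intros hG hlt.
  pose proof (circle_integral_lt (fun _ _ => 0) G r (continuous2_const 0) hG hlt) as h.
  rewrite circle_integral_const, Rmult_0_r in h. exact h.
Qed.

(* At the origin the radial derivative is a trigonometric polynomial of mean zero. *)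
Lemma circle_integral_radial_origin (g : R -> R -> R) : circle_integral (radial g) 0 = 0.
Proof.
  set (a := partial true g 0 0). set (b := partial false g 0 0).
  unfold circle_integral.
  rewrite (RInt_ext _ (fun t => a * cos t + b * sin t)).
  2: { intros t _. unfold radial, polar. rewrite !Rmult_0_l. reflexivity. }
  assert (hd : forall t, Rmin 0 (2 * PI) <= t <= Rmax 0 (2 * PI) ->
    is_derive (fun t => a * sin t - b * cos t) t (a * cos t + b * sin t)).
  { intros t _. auto_derive; auto. ring. }
  assert (hc : forall t, Rmin 0 (2 * PI) <= t <= Rmax 0 (2 * PI) ->
    continuous (fun t => a * cos t + b * sin t) t).
  { intros t _. apply (ex_derive_continuous (K:=R_AbsRing) (V:=R_NormedModule)).
    auto_derive. auto. }
  rewrite (is_RInt_unique _ _ _ _ (is_RInt_derive (V:=R_CompleteNormedModule) _ _ _ _ hd hc)).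
  rewrite cos_2PI, sin_2PI, cos_0, sin_0. unfold minus, plus, opp. simpl. ring.
Qed.

(* The second angular derivative integrates to zero, the first being 2 pi-periodic. *)
Lemma circle_integral_angular2 (g : R -> R -> R) (r : R) :
  Ck2 2 g -> circle_integral (angular2 g) r = 0.
Proof.
  intros hg. unfold circle_integral.
  rewrite (is_RInt_unique _ _ _ _
    (is_RInt_derive (fun t => angular g r t) (fun t => angular2 g r t) 0 (2 * PI)
      (fun t _ => angular_deriv_t g r t hg)
      (fun t _ => continuous2_section _ r t (continuous2_angular2 g hg)))).
  unfold angular, polar. rewrite cos_2PI, sin_2PI, cos_0, sin_0.
  unfold minus, plus, opp. simpl. ring.
Qed.

Lemma circle_integral_laplacian (g : R -> R -> R) (r : R) : Ck2 2 g ->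
  r * circle_integral (radial g) r + r * r * circle_integral (radial2 g) r
  = r * r * circle_integral (polar (laplacian g)) r.
Proof.
  intros hg. assert (hg1 : Ck2 1 g) by exact (Ck2_weaken 2 1 g hg ltac:(lia)).
  rewrite <- circle_integral_lin by auto using continuous2_radial, continuous2_radial2.
  transitivity (circle_integral (fun z t => r * r * polar (laplacian g) z t + (-1) * angular2 g z t) r).
  - unfold circle_integral. apply RInt_ext. intros t _. cbv beta.
    rewrite polar_laplacian. change (?a = ?b) with (@eq R a b). ring.
  - assert (hL : continuous2 (polar (laplacian g)))
      by exact (continuous2_polar _ (Ck2_continuous 0 _ (Ck2_laplacian 0 g hg))).
    rewrite circle_integral_lin, circle_integral_angular2 by auto using continuous2_angular2.
    ring.
Qed.

Lemma circle_mean_deriv (g : R -> R -> R) (r : R) :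
  Ck2 1 g -> is_derive (circle_integral (polar g)) r (circle_integral (radial g) r).
Proof.
  intros hg. apply circle_integral_deriv.
  - intros z t. apply polar_deriv_r, hg.
  - apply continuous2_polar, (Ck2_continuous 1), hg.
  - apply continuous2_radial, hg.
Qed.

Lemma circle_flux_deriv (g : R -> R -> R) (r : R) : Ck2 2 g ->
  is_derive (fun z => z * circle_integral (radial g) z) r
            (r * circle_integral (polar (laplacian g)) r).
Proof.
  intros hg. eapply is_derive_eq.
  - apply is_derive_Rmult; [apply (is_derive_id r) |].
    apply (circle_integral_deriv (radial g) (radial2 g)).
    + intros z t. apply radial_deriv_r, hg.
    + apply continuous2_radial, (Ck2_weaken 2 1 g hg ltac:(lia)).
    + apply continuous2_radial2, hg.
  - unfold one. simpl. destruct (Req_dec r 0) as [-> | hr].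
    + rewrite circle_integral_radial_origin. ring.
    + apply (Rmult_eq_reg_l r); [| exact hr].
      transitivity (r * circle_integral (radial g) r + r * r * circle_integral (radial2 g) r).
      * ring.
      * rewrite (circle_integral_laplacian g r hg). ring.
Qed.

(* First ODE step.  If (r A')' = r M with M < 0, then r A'(r) is decreasing from its value
   0 at r = 0, so r A'(r) <= -a < 0 for r >= 1; hence A(r) <= A(1) - a ln r is eventually
   below -1. *)
Lemma radial_superharmonic_unbounded (A B M : R -> R) :
  (forall r : R, is_derive A r (B r)) ->
  (forall r : R, is_derive (fun z => z * B z) r (r * M r)) ->
  (forall r, M r < 0) ->
  exists R0, forall r, R0 <= r -> A r <= -1.
Proof.
  intros hA hB hM.
  assert (hflux : forall r s, 0 <= r <= s -> s * B s <= r * B r).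
  { intros r s hrs.
    apply (nonincreasing_of_deriv (fun z => z * B z) (fun z => z * M z) r s); [lra | |].
    - intros x _. apply hB.
    - intros x hx. pose proof (hM x). nra. }
  set (a := - (1 * B 1)).
  assert (ha : 0 < a).
  { assert (h : 1 * B 1 < (1 / 2) * B (1 / 2)).
    { apply (decreasing_of_deriv (fun z => z * B z) (fun z => z * M z) (1 / 2) 1); [lra | |].
      - intros x _. apply hB.
      - intros x hx. pose proof (hM x). nra. }
    pose proof (hflux 0 (1 / 2) ltac:(lra)). unfold a. lra. }
  assert (hslope : forall r, 1 <= r -> B r + a / r <= 0).
  { intros r hr. pose proof (hflux 1 r ltac:(lra)).
    assert (e : (B r + a / r) * r = r * B r + a) by (field; lra).
    apply (Rmult_le_reg_r r); [lra |]. rewrite e, Rmult_0_l. unfold a. lra. }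
  assert (hlog : forall r, 1 <= r -> A r + a * ln r <= A 1).
  { intros r hr. replace (A 1) with (A 1 + a * ln 1) by (rewrite ln_1; ring).
    apply (nonincreasing_of_deriv (fun z => A z + a * ln z) (fun z => B z + a / z)); [lra | |].
    - intros x hx. apply is_derive_Rplus; [apply hA |].
      apply (is_derive_scal (fun z => ln z)), is_derive_ln. lra.
    - intros x hx. apply hslope. lra. }
  set (L := (Rabs (A 1) + 1) / a).
  assert (hL : 0 < L) by (unfold L; pose proof (Rabs_pos (A 1)); apply Rdiv_lt_0_compat; lra).
  exists (exp L). intros r hr.
  assert (h1 : 1 <= exp L) by (pose proof (exp_ineq1 L ltac:(lra)); lra).
  assert (hlnr : L <= ln r) by (rewrite <- (ln_exp L); apply ln_le; [apply exp_pos | exact hr]).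
  assert (e : a * L = Rabs (A 1) + 1) by (unfold L; field; lra).
  pose proof (hlog r ltac:(lra)). pose proof (Rle_abs (A 1)). nra.
Qed.

(* Second ODE step.  If (r A')' = r F with F <= -1 from some radius on, then
   r A'(r) <= K - r^2/2, so eventually A' <= -1 and A becomes negative. *)
Lemma radial_eventually_negative (A B F : R -> R) (R0 : R) :
  (forall r : R, is_derive A r (B r)) ->
  (forall r : R, is_derive (fun z => z * B z) r (r * F r)) ->
  (forall r, R0 <= r -> F r <= -1) ->
  exists r, A r < 0.
Proof.
  intros hA hB hF.
  set (R1 := Rmax R0 1).
  assert (hR1 : R0 <= R1 /\ 1 <= R1) by (split; [apply Rmax_l | apply Rmax_r]).
  set (K := R1 * B R1 + R1 * R1 / 2).
  assert (hflux : forall r, R1 <= r -> r * B r + r * r / 2 <= K).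
  { intros r hr.
    apply (nonincreasing_of_deriv (fun z => z * B z + z * z / 2) (fun z => z * F z + z)); [lra | |].
    - intros x _. apply is_derive_Rplus; [apply hB | auto_derive; auto; field].
    - intros x hx. pose proof (hF x ltac:(lra)). nra. }
  set (R2 := Rmax R1 (2 * Rabs K + 2)).
  assert (hR2 : R1 <= R2 /\ 2 * Rabs K + 2 <= R2) by (split; [apply Rmax_l | apply Rmax_r]).
  assert (hslope : forall r, R2 <= r -> B r + 1 <= 0).
  { intros r hr. pose proof (hflux r ltac:(lra)). pose proof (Rle_abs K). pose proof (Rabs_pos K).
    assert (h1 : r * (r / 2 - 1) >= 2 * (r / 2 - 1)) by nra.
    assert (h2 : r * (B r + 1) <= 0) by nra.
    nra. }
  assert (hlin : forall r, R2 <= r -> A r + r <= A R2 + R2).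
  { intros r hr. apply (nonincreasing_of_deriv (fun z => A z + z) (fun z => B z + 1)); [lra | |].
    - intros x _. apply is_derive_Rplus; [apply hA | apply (is_derive_id x)].
    - intros x hx. apply hslope. lra. }
  exists (R2 + Rabs (A R2) + 1).
  pose proof (hlin (R2 + Rabs (A R2) + 1)) as h. pose proof (Rle_abs (A R2)).
  pose proof (Rabs_pos (A R2)). specialize (h ltac:(lra)). lra.
Qed.

Theorem theorem1p2 (q : R) (hq : 0 < q) :
  ~ (exists u : R -> R -> R,
        Ck2 4 u /\
        (forall x y : R, 0 < u x y) /\
        (forall x y : R,
            laplacian (laplacian u) x y + Rpower (u x y) (- q) = 0)).
Proof.
  intros [u [hu [hpos heq]]].
  set (w := laplacian u).
  assert (hu2 : Ck2 2 u) by exact (Ck2_weaken 4 2 u hu ltac:(lia)).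
  assert (hw : Ck2 2 w) by exact (Ck2_laplacian 2 u hu).
  (* The circle integral of w = Delta u has (r A_w')' = r M with M < 0, since Delta w < 0. *)
  destruct (radial_superharmonic_unbounded (circle_integral (polar w))
             (circle_integral (radial w)) (circle_integral (polar (laplacian w))))
    as [R0 hR0].
  - intros r. apply circle_mean_deriv, (Ck2_weaken 2 1 w hw ltac:(lia)).
  - intros r. apply circle_flux_deriv, hw.
  - intros r. apply circle_integral_neg.
    + apply continuous2_polar, (Ck2_continuous 0), Ck2_laplacian, hw.
    + intros t. unfold polar, w. pose proof (heq (r * cos t) (r * sin t)).
      assert (0 < Rpower (u (r * cos t) (r * sin t)) (- q)) by apply exp_pos. lra.
  (* Hence (r A_u')' = r A_w with A_w <= -1 eventually, so A_u becomes negative. *)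
  - destruct (radial_eventually_negative (circle_integral (polar u))
               (circle_integral (radial u)) (circle_integral (polar w)) R0) as [r hr].
    + intros r. apply circle_mean_deriv, (Ck2_weaken 2 1 u hu2 ltac:(lia)).
    + intros r. apply circle_flux_deriv, hu2.
    + exact hR0.
    + apply (Rlt_asym _ _ hr), circle_integral_pos.
      * apply continuous2_polar, (Ck2_continuous 2), hu2.
      * intros t. apply hpos.
Qed.
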